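(* Let $m>1$ be odd. There exists an OQS of length $m$ if and only if there exists a normalized cocycle $\psi\in Z^2(\mathbb{Z}_2\times\mathbb{Z}_m,\langle-1\rangle)$ that is quasi-orthogonal and is not a coboundary.
   Context: A quaternary sequence $f:\mathbb{Z}_m\to\{\pm1,\pm\mathrm{i}\}$ of odd length $m$ is an OQS if $|R_f(w)|=1$ for all $1\le w\le m-1$, where $R_f(w)=\sum_{k\in\mathbb{Z}_m}f(k)\overline{f(k+w)}$. For a finite group $G$, a cocycle is a map $\psi:G\times G\to\langle-1\rangle=\{\pm1\}$ with $\psi(g,h)\psi(gh,k)=\psi(g,hk)\psi(h,k)$ for all $g,h,k\in G$; it is normalized if $\psi(1,1)=1$. These form a group $Z^2(G,\langle-1\rangle)$ under pointwise multiplication. For $\phi:G\to\{\pm1\}$, the coboundary $\partial\phi(g,h)=\phi(g)^{-1}\phi(h)^{-1}\phi(gh)$; coboundaries form the subgroup $B^2(G,\langle-1\rangle)$. The cocyclic matrix is $M_\psi=[\psi(g,h)]_{g,h\in G}$. Its row excess $RE(M_\psi)$ is the sum of the absolute values of all row sums of $M_\psi$ except the row indexed by the identity. If $|G|=4t+2$, a normalized cocycle $\psi$ is quasi-orthogonal if either $\psi\notin B^2(G,\langle-1\rangle)$ and $RE(M_\psi)=4t$, or $\psi\in B^2(G,\langle-1\rangle)$ and $RE(M_\psi)=8t+2$. *)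

From HB Require Import structures.
From mathcomp Require Import all_boot all_order all_algebra all_field.
Set Implicit Arguments. Unset Strict Implicit. Unset Printing Implicit Defensive.
Import Order.TTheory GRing.Theory Num.Theory.
Local Open Scope ring_scope.

Definition quaternary (m : nat) (f : 'Z_m -> algC) : Prop :=
  forall k, f k = 1 \/ f k = -1 \/ f k = 'i \/ f k = - 'i.

Definition autocorr (m : nat) (f : 'Z_m -> algC) (w : 'Z_m) : algC :=
  \sum_(k : 'Z_m) f k * (f (k + w))^*.

Definition is_OQS (m : nat) (f : 'Z_m -> algC) : Prop :=
  quaternary f /\ forall w : 'Z_m, w != 0 -> `|autocorr f w| = 1.

Definition G2m (m : nat) : Type := ('Z_2 * 'Z_m)%type.

Section Cocycles.
Variable m : nat.
Local Notation G := ('Z_2 * 'Z_m)%type.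

Definition pm1 (x : int) : Prop := x = 1 \/ x = -1.

Definition is_cocycle (psi : G -> G -> int) : Prop :=
  (forall g h, pm1 (psi g h)) /\
  forall g h k, psi g h * psi (g + h) k = psi g (h + k) * psi h k.

Definition normalized (psi : G -> G -> int) : Prop := psi 0 0 = 1.

Definition coboundary (psi : G -> G -> int) : Prop :=
  exists phi : G -> int, (forall g, pm1 (phi g)) /\
    forall g h, psi g h = (phi g)^-1 * (phi h)^-1 * phi (g + h).

Definition row_excess (psi : G -> G -> int) : int :=
  \sum_(g : G | g != 0) `| \sum_(h : G) psi g h |.

Definition quasi_orthogonal (psi : G -> G -> int) : Prop :=
  normalized psi /\
  exists t : nat, #|{: G}| = (4 * t + 2)%N /\
    ((~ coboundary psi /\ row_excess psi = (4 * t)%:Z) \/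
     (coboundary psi /\ row_excess psi = (8 * t + 2)%:Z)).
End Cocycles.

(* A quaternary f corresponds to a pair (u, v) of ±1 sequences through
   f = ((u + v) + i (u - v)) / 2, and then 2 R_f(w) = A(w) + i B(w) with
   A(w) = Σ u(y)u(y+w) + v(y)v(y+w) and B(w) = Σ u(y)v(y+w) - v(y)u(y+w).
   As m is odd, A(w) = 2 mod 4, so |R_f(w)| = 1 iff |A(w)| = 2 and B(w) = 0.

   Since Z_2 x Z_m is cyclic of even order, the cohomology class of a normalized
   cocycle is detected by the sign psi(e,e) psi(0,0), e = (1,0); hence every
   non-coboundary is beta times the coboundary of some phi, where beta is the
   inflation of the non-trivial cocycle of Z_2.  Writing phi = (u, v) on the two
   cosets of Z_m, the rows (0,x) and (1,x) of M_psi sum to ±A(x) and ±B(x).  So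
   RE(M_psi) >= 2(m-1) = 4t, with equality iff |A(x)| = 2 and B(x) = 0 for x <> 0. *)
From HB Require Import structures.
From mathcomp Require Import all_boot all_order all_algebra all_field.
From mathcomp Require Import zify ring.
Import Order.TTheory GRing.Theory Num.Theory.
Local Open Scope ring_scope.
Set Implicit Arguments. Unset Strict Implicit. Unset Printing Implicit Defensive.

Lemma pm1M (x y : int) : pm1 x -> pm1 y -> pm1 (x * y).
Proof. by case=> ->; case=> ->; rewrite /pm1 ?mulr1 ?mulN1r ?opprK; auto. Qed.

Lemma pm1_mulrr (x : int) : pm1 x -> x * x = 1.
Proof. by case=> ->; rewrite ?mulr1 ?mulrNN ?mulr1. Qed.

Lemma pm1_invr (x : int) : pm1 x -> x^-1 = x.
Proof. by case=> ->; rewrite ?invr1 ?invrN1. Qed.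

Lemma pm1_normr (x : int) : pm1 x -> `|x| = 1.
Proof. by case=> ->. Qed.

Lemma odd_half (n : nat) : odd n -> n = (2 * n./2 + 1)%N.
Proof. by move=> on; rewrite -{1}(odd_double_half n) on; lia. Qed.

Lemma Z2_cases (a : 'Z_2) : a = 0 \/ a = 1.
Proof. by case: a => [[|[|n]] ?] //=; [left | right]; apply/val_inj. Qed.

Lemma cocycleM m (psi chi : G2m m -> G2m m -> int) :
  is_cocycle psi -> is_cocycle chi -> is_cocycle (fun g h => psi g h * chi g h).
Proof.
move=> [psi_pm1 psiC] [chi_pm1 chiC]; split=> [g h | g h k]; first exact: pm1M.
transitivity ((psi g h * psi (g + h) k) * (chi g h * chi (g + h) k)); first ring.
by rewrite psiC chiC; ring.
Qed.

Lemma coboundaryE m (psi : G2m m -> G2m m -> int) :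
  coboundary psi <-> exists phi : G2m m -> int, (forall g, pm1 (phi g)) /\
    forall g h, psi g h = phi g * phi h * phi (g + h).
Proof.
by split=> -[phi [phi_pm1 psiE]]; exists phi; split=> // g h; rewrite psiE ?pm1_invr.
Qed.

Lemma cocycle_r0 m (psi : G2m m -> G2m m -> int) :
  is_cocycle psi -> forall g, psi g 0 = psi 0 0.
Proof.
move=> [psi_pm1 psiC] g; have := psiC g 0 0; rewrite !addr0 pm1_mulrr // => E.
by rewrite -[LHS]mulr1 E mulrA pm1_mulrr ?mul1r.
Qed.

Lemma add_10_10 m : ((1, 0) + (1, 0) : G2m m) = 0.
Proof. by apply/eqP; rewrite xpair_eqE /= addr0 eqxx. Qed.

Lemma card_G2m m : (1 < m)%N -> #|{: G2m m}| = (2 * m)%N.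
Proof. by move=> m_gt1; rewrite card_prod !card_ord (Zp_cast m_gt1). Qed.

Lemma sum_G2m m (F : G2m m -> int) :
  \sum_h F h = \sum_y F (0, y) + \sum_y F (1, y).
Proof.
rewrite (eq_bigr (fun p => F (p.1, p.2))); last by case.
rewrite -(pair_bigA _ (fun a y => F (a, y))) /= big_ord_recl big_ord_recl big_ord0 addr0.
by congr (_ + _); apply: eq_bigr => y _; congr (F (_, y)); apply/val_inj.
Qed.

Lemma eq_row_excess m (psi chi : G2m m -> G2m m -> int) :
  psi =2 chi -> row_excess psi = row_excess chi.
Proof. by move=> psiE; apply: eq_bigr => g _; congr `|_|; apply: eq_bigr. Qed.

Section CohomologyClass.

Variable m : nat.
Local Notation G := (G2m m).

Definition beta (g h : G) : int := if (g.1 != 0) && (h.1 != 0) then -1 else 1.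

Lemma beta_pm1 g h : pm1 (beta g h).
Proof. by rewrite /beta /pm1; case: ifP; auto. Qed.

Lemma beta_is_cocycle : is_cocycle beta.
Proof.
split=> [|[a x] [b y] [c z]]; first exact: beta_pm1.
by rewrite /beta /=; case: (Z2_cases a) => ->; case: (Z2_cases b) => ->;
  case: (Z2_cases c) => ->.
Qed.

Definition class_sign (psi : G -> G -> int) : int := psi (1, 0) (1, 0) * psi 0 0.

Lemma class_sign_coboundary psi : coboundary psi -> class_sign psi = 1.
Proof.
case/coboundaryE=> phi [phi_pm1 psiE].
by rewrite /class_sign !psiE add_10_10 addr0 !pm1_mulrr ?mul1r.
Qed.

Lemma class_sign_beta : class_sign beta = -1.
Proof. by []. Qed.

Hypotheses (m_gt1 : (1 < m)%N) (m_odd : odd m).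

(* Z_2 x Z_m is cyclic of order 2m, generated by (1, 1). *)
Definition gpow (k : nat) : G := (k%:R, k%:R).
Arguments gpow : simpl never.

Lemma gpowD a b : gpow (a + b) = gpow a + gpow b.
Proof. by rewrite /gpow !natrD. Qed.

Lemma gpow0 : gpow 0 = 0.
Proof. by []. Qed.

Lemma gpow_m : gpow m = (1, 0).
Proof.
apply/eqP; rewrite xpair_eqE; apply/andP; split; apply/eqP/val_inj;
  rewrite /= val_Zp_nat // ?modnn //.
by rewrite modn2 m_odd.
Qed.

Lemma gpow_2m : gpow (2 * m) = 0.
Proof.
apply/eqP; rewrite xpair_eqE; apply/andP; split; apply/eqP/val_inj;
  by rewrite /= val_Zp_nat // ?modnMr ?modnMl.
Qed.

Lemma gpow_inj_mod a b : gpow a = gpow b -> (a %% (2 * m) = b %% (2 * m))%N.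
Proof.
move/eqP; rewrite xpair_eqE => /andP[/eqP/(congr1 val) E2 /eqP/(congr1 val) Em].
move: E2 Em; rewrite /= !val_Zp_nat // => E2 Em.
by apply/eqP; rewrite chinese_remainder ?coprime2n // E2 Em !eqxx.
Qed.

Definition gpow_index (g : G) : nat := (g.2 : nat) + m * (((g.1 : nat) + g.2) %% 2).

Lemma gpow_indexK g : gpow (gpow_index g) = g.
Proof.
case: g => a x; apply/eqP; rewrite /gpow /gpow_index xpair_eqE /=.
apply/andP; split; apply/eqP/val_inj; rewrite /= val_Zp_nat //.
  have a_lt2 : (a < 2)%N by case: a.
  have := odd_half m_odd; set t := m./2 => mE; nia.
have x_ltm : (x < m)%N by have := ltn_ord x; rewrite [X in (_ < X)%N -> _]Zp_cast.
by rewrite addnC mulnC modnMDl modn_small.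
Qed.

Fixpoint cumprod (psi : G -> G -> int) (k : nat) : int :=
  if k is k'.+1 then cumprod psi k' * psi (gpow k') (gpow 1) else 1.

Lemma cumprod_pm1 psi : is_cocycle psi -> forall k, pm1 (cumprod psi k).
Proof. by case=> psi_pm1 _; elim=> [|k IHk] /=; [left | exact: pm1M]. Qed.

Lemma cumprodD psi : is_cocycle psi -> normalized psi ->
  forall a b, cumprod psi (a + b) = cumprod psi a * cumprod psi b * psi (gpow a) (gpow b).
Proof.
move=> psiC psiN a; elim=> [|b IHb].
  by rewrite addn0 /= gpow0 (cocycle_r0 psiC) psiN !mulr1.
rewrite addnS /= IHb gpowD -mulrA psiC.2 -[b.+1]addn1 gpowD; ring.
Qed.

(* The coboundary witness is k |-> cumprod psi k read along the generator; it is
   well defined because the class sign makes cumprod psi 2m-periodic. *)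
Lemma class_sign1_coboundary psi :
  is_cocycle psi -> normalized psi -> class_sign psi = 1 -> coboundary psi.
Proof.
move=> psiC psiN sign1; apply/coboundaryE.
have prod_2m : cumprod psi (2 * m) = 1.
  rewrite mul2n -addnn cumprodD // gpow_m pm1_mulrr ?mul1r; last exact: cumprod_pm1.
  by move: sign1; rewrite /class_sign psiN mulr1.
have cumprod_mod k : cumprod psi k = cumprod psi (k %% (2 * m)).
  rewrite {1}(divn_eq k (2 * m)); elim: (k %/ (2 * m))%N => [|q IHq].
    by rewrite mul0n add0n.
  rewrite mulSnr addnAC cumprodD // prod_2m gpow_2m (cocycle_r0 psiC) psiN !mulr1 //.
exists (fun g => cumprod psi (gpow_index g)); split=> [g | g h].
  exact: cumprod_pm1.
have -> : cumprod psi (gpow_index (g + h)) = cumprod psi (gpow_index g + gpow_index h).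
  by rewrite cumprod_mod [RHS]cumprod_mod; congr cumprod; apply: gpow_inj_mod;
     rewrite gpowD !gpow_indexK.
rewrite cumprodD // !gpow_indexK.
have := pm1_mulrr (cumprod_pm1 psiC (gpow_index g)).
have := pm1_mulrr (cumprod_pm1 psiC (gpow_index h)).
set x := cumprod psi _; set y := cumprod psi _ => yy xx.
by rewrite -[LHS]mul1r -[1]mul1r -{1}xx -yy; ring.
Qed.

Lemma noncoboundary_betaE psi : is_cocycle psi -> normalized psi -> ~ coboundary psi ->
  exists phi : G -> int, (forall g, pm1 (phi g)) /\
    forall g h, psi g h = beta g h * (phi g * phi h * phi (g + h)).
Proof.
move=> psiC psiN psiNC.
have sign_psi : class_sign psi = -1.
  have : pm1 (class_sign psi) by apply: pm1M; apply: psiC.1.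
  by case=> // sign1; case: psiNC; apply: class_sign1_coboundary.
have [|phi [phi_pm1 psibetaE]] := (coboundaryE (fun g h => psi g h * beta g h)).1.
  apply: class_sign1_coboundary; first exact: cocycleM psiC beta_is_cocycle.
    by rewrite /normalized psiN.
  transitivity (class_sign psi * class_sign beta); first by rewrite /class_sign; ring.
  by rewrite sign_psi class_sign_beta.
exists phi; split=> // g h; rewrite -psibetaE mulrCA pm1_mulrr ?mulr1 //.
exact: beta_pm1.
Qed.

End CohomologyClass.

Section PairsOfSequences.

Variable m : nat.
Local Notation G := (G2m m).
Variables u v : 'Z_m -> int.
Hypotheses (u_pm1 : forall y, pm1 (u y)) (v_pm1 : forall y, pm1 (v y)).

Definition phi_of (g : G) : int := if g.1 == 0 then u g.2 else v g.2.

(* The factor [u 0] makes [psi_of] normalized. *)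
Definition psi_of (g h : G) : int :=
  u 0 * beta g h * (phi_of g * phi_of h * phi_of (g + h)).

Definition corrA (x : 'Z_m) : int := \sum_y (u y * u (y + x) + v y * v (y + x)).
Definition corrB (x : 'Z_m) : int := \sum_y (u y * v (y + x) - v y * u (y + x)).

Definition perfect_pair : Prop := forall x, x != 0 -> `|corrA x| = 2 /\ corrB x = 0.

Lemma phi_of_pm1 g : pm1 (phi_of g).
Proof. by rewrite /phi_of; case: ifP. Qed.

Lemma psi_of_cocycle : is_cocycle psi_of.
Proof.
split=> [g h | g h k].
  by rewrite /psi_of; do !apply: pm1M => //; [exact: beta_pm1 | exact: phi_of_pm1..].
have [_ betaC] := beta_is_cocycle m.
have sq g := pm1_mulrr (phi_of_pm1 g).
rewrite /psi_of.
rewrite [LHS](_ : _ = (u 0 * u 0) * (beta g h * beta (g + h) k) *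
   (phi_of (g + h) * phi_of (g + h)) *
   (phi_of g * phi_of h * phi_of k * phi_of (g + h + k))); last ring.
rewrite [RHS](_ : _ = (u 0 * u 0) * (beta g (h + k) * beta h k) *
   (phi_of (h + k) * phi_of (h + k)) *
   (phi_of g * phi_of h * phi_of k * phi_of (g + (h + k)))); last ring.
by rewrite betaC !sq addrA.
Qed.

Lemma psi_of_normalized : normalized psi_of.
Proof.
rewrite /normalized /psi_of /phi_of /= addr0 /beta /= mulr1 !mulrA.
by rewrite pm1_mulrr // mul1r pm1_mulrr.
Qed.

Lemma psi_of_noncoboundary : ~ coboundary psi_of.
Proof.
move/class_sign_coboundary; rewrite /class_sign /psi_of.
rewrite add_10_10 !addr0 /beta /=.
by case: (u_pm1 0) => ->; case: (phi_of_pm1 0) => ->; case: (phi_of_pm1 (1, 0)) => ->.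
Qed.

Definition reduced_rowsum (g : G) : int := \sum_h beta g h * (phi_of h * phi_of (g + h)).

Lemma normr_rowsum_psi_of g : `|\sum_h psi_of g h| = `|reduced_rowsum g|.
Proof.
rewrite (eq_bigr (fun h => (u 0 * phi_of g) * (beta g h * (phi_of h * phi_of (g + h)))));
  last by move=> h _; rewrite /psi_of; ring.
by rewrite -mulr_sumr !normrM (pm1_normr (u_pm1 0)) (pm1_normr (phi_of_pm1 g)) !mul1r.
Qed.

Lemma reduced_rowsum0 x : reduced_rowsum (0, x) = corrA x.
Proof.
rewrite /reduced_rowsum sum_G2m /corrA big_split /=.
by congr (_ + _); apply: eq_bigr => y _; rewrite /beta /phi_of /= mul1r addrC.
Qed.

Lemma reduced_rowsum1 x : reduced_rowsum (1, x) = corrB x.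
Proof.
rewrite /reduced_rowsum sum_G2m /corrB big_split /=.
by congr (_ + _); apply: eq_bigr => y _; rewrite /beta /phi_of /= ?mul1r ?mulN1r addrC.
Qed.

Lemma corrB0 : corrB 0 = 0.
Proof. by rewrite /corrB big1 // => y _; rewrite addr0 mulrC subrr. Qed.

Lemma row_excess_psi_of : row_excess psi_of = \sum_(x | x != 0) (`|corrA x| + `|corrB x|).
Proof.
rewrite /row_excess (eq_bigr _ (fun g _ => normr_rowsum_psi_of g)).
have : \sum_(g : G) `|reduced_rowsum g|
       = `|reduced_rowsum 0| + \sum_(g : G | g != 0) `|reduced_rowsum g|.
  by rewrite (bigD1 (0 : G)).
rewrite sum_G2m -big_split /= (bigD1 (0 : 'Z_m)) //= reduced_rowsum0 reduced_rowsum1.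
rewrite corrB0 normr0 addr0.
under eq_bigr do rewrite reduced_rowsum0 reduced_rowsum1.
by move/addrI.
Qed.

Hypotheses (m_gt1 : (1 < m)%N) (m_odd : odd m).

Lemma sum_constZ (c : int) : \sum_(y : 'Z_m) c = c * m%:Z.
Proof. by rewrite sumr_const card_ord Zp_cast // -mulr_natr natz. Qed.

(* With w = 1 - 2b, b in {0, 1}: w(y) w(y+x) = 1 + 4 (b(y) b(y+x) - b(y)) + 2 (b(y) - b(y+x)),
   and the last term sums to 0 over Z_m. *)
Lemma autocorr_pm1_mod4 (w : 'Z_m -> int) x : (forall y, pm1 (w y)) ->
  exists K : int, \sum_y w y * w (y + x) = m%:Z + 4 * K.
Proof.
move=> w_pm1; pose b y : int := (w y == -1)%:Z.
have wE y : w y = 1 - 2 * b y by rewrite /b; case: (w_pm1 y) => ->.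
exists (\sum_y (b y * b (y + x) - b y)).
rewrite (eq_bigr (fun y => 1 + 4 * (b y * b (y + x) - b y) + 2 * (b y - b (y + x))));
  last by move=> y _; rewrite !wE; ring.
have shift : \sum_y b (y + x) = \sum_y b y by rewrite [RHS](reindex_inj (addIr x)).
rewrite big_split big_split /= sum_constZ mul1r -!mulr_sumr [X in 2 * X]sumrB shift.
by rewrite subrr mulr0 addr0.
Qed.

Lemma corrA_ge2 x : 2 <= `|corrA x|.
Proof.
have [K1 E1] := autocorr_pm1_mod4 x u_pm1; have [K2 E2] := autocorr_pm1_mod4 x v_pm1.
rewrite /corrA big_split /= E1 E2 (odd_half m_odd); lia.
Qed.

Lemma row_excess_psi_ofE : row_excess psi_of = (4 * m./2)%:Z <-> perfect_pair.
Proof.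
have sum2 : \sum_(x : 'Z_m | x != 0) (2 : int) = (4 * m./2)%:Z.
  have := sum_constZ 2; rewrite (bigD1 (0 : 'Z_m)) //= (odd_half m_odd) => E.
  by apply: (addrI 2); rewrite E; lia.
have excess_ge0 x : 0 <= `|corrA x| + `|corrB x| - 2.
  by have := corrA_ge2 x; have := normr_ge0 (corrB x); lia.
rewrite row_excess_psi_of -sum2; split=> [RE x x_neq0 | uvP].
  have : \sum_(x | x != 0) (`|corrA x| + `|corrB x| - 2) = 0 by rewrite sumrB RE subrr.
  move/(psumr_eq0P (fun x _ => excess_ge0 x))/(_ x x_neq0).
  have := corrA_ge2 x; have := normr_ge0 (corrB x) => h1 h2 h3.
  by split; [lia | apply/normr0_eq0; lia].
by apply: eq_bigr => x /uvP[-> ->]; rewrite normr0 addr0.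
Qed.

End PairsOfSequences.

Lemma quasi_orthogonal_noncoboundaryE m (psi : G2m m -> G2m m -> int) :
  (1 < m)%N -> odd m -> normalized psi -> ~ coboundary psi ->
  quasi_orthogonal psi <-> row_excess psi = (4 * m./2)%:Z.
Proof.
move=> m_gt1 m_odd psiN psiNC.
have cardG : #|{: G2m m}| = (4 * m./2 + 2)%N.
  by rewrite card_G2m // {1}(odd_half m_odd); lia.
split=> [[_ [t [cardt [[_ ->] | [/psiNC]]]]] | RE] //.
  by move: cardt; rewrite cardG => cardt; congr _%:Z; lia.
by split=> //; exists m./2; split=> //; left.
Qed.

Lemma noncoboundary_psi_of m (psi : G2m m -> G2m m -> int) :
  (1 < m)%N -> odd m -> is_cocycle psi -> normalized psi -> ~ coboundary psi ->
  exists u v : 'Z_m -> int, [/\ forall y, pm1 (u y), forall y, pm1 (v y) & psi =2 psi_of u v].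
Proof.
move=> m_gt1 m_odd psiC psiN psiNC.
have [phi [phi_pm1 psiE]] := noncoboundary_betaE m_gt1 m_odd psiC psiN psiNC.
exists (fun y => phi (0, y)), (fun y => phi (1, y)); split=> // g h.
have phi0 : phi 0 = 1.
  by move: psiN; rewrite /normalized psiE addr0 /beta /= mul1r; case: (phi_pm1 0) => ->.
have phi_ofE k : phi_of (fun y => phi (0, y)) (fun y => phi (1, y)) k = phi k.
  by case: k => a y; rewrite /phi_of /=; case: (Z2_cases a) => ->.
by rewrite psiE /psi_of !phi_ofE phi0 mul1r.
Qed.

Section QuaternarySequences.

Variable m : nat.

Definition quat_of (u v : 'Z_m -> int) (k : 'Z_m) : algC :=
  ((u k + v k)%:~R + 'i * (u k - v k)%:~R) / 2.

Lemma conj_quat_of u v k :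
  (quat_of u v k)^* = ((u k + v k)%:~R - 'i * (u k - v k)%:~R) / 2.
Proof.
rewrite /quat_of rmorphM rmorphD rmorphM /= conjCi !rmorph_int fmorphV rmorph_nat.
by rewrite mulNr.
Qed.

Lemma autocorr_quat_of u v w :
  2 * autocorr (quat_of u v) w = (corrA u v w)%:~R + 'i * (corrB u v w)%:~R.
Proof.
rewrite /autocorr /corrA /corrB mulr_sumr !rmorph_sum mulr_sumr -big_split.
apply: eq_bigr => k _ /=; rewrite conj_quat_of /quat_of !intrD !intrN !intrM.
set a := _%:~R; set b := _%:~R; set c := _%:~R; set d := _%:~R.
apply/subr0_eq; rewrite (_ : _ - _ = ('i * 'i + 1) * (- (a - b) * (c - d) / 2)).
  by rewrite mulCii addNr mul0r.
by field.
Qed.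

Lemma normr_autocorr_quat_of u v w :
  `|autocorr (quat_of u v) w| = 1 <-> corrA u v w * corrA u v w + corrB u v w * corrB u v w = 4.
Proof.
have := autocorr_quat_of u v w.
set z := autocorr _ w; set A := corrA u v w; set B := corrB u v w => zE.
have four : (4 : algC) = (4 : int)%:~R by [].
have four_neq0 : (4 : algC) != 0 by rewrite four intr_eq0.
have normz : `|z| ^+ 2 = (A * A + B * B)%:~R / 4.
  rewrite normCK (_ : z = (A%:~R + 'i * B%:~R) / 2); last by rewrite -zE; field.
  rewrite rmorphM rmorphD rmorphM /= conjCi !rmorph_int fmorphV rmorph_nat intrD !intrM.
  apply/subr0_eq; rewrite (_ : _ - _ = ('i * 'i + 1) * (- (B%:~R * B%:~R) / 4)).
    by rewrite mulCii addNr mul0r.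
  by field.
split=> [normz1 | AB4].
  move: normz; rewrite normz1 expr1n => /(congr1 (fun x => x * 4)).
  by rewrite mulfVK // mul1r four => /eqP; rewrite eqr_int => /eqP.
by apply/eqP; rewrite -(sqrp_eq1 (normr_ge0 _)) normz AB4 -four divff.
Qed.

Lemma quat_of_quaternary u v : (forall y, pm1 (u y)) -> (forall y, pm1 (v y)) ->
  quaternary (quat_of u v).
Proof.
move=> u_pm1 v_pm1 k; rewrite /quat_of.
case: (u_pm1 k) => ->; case: (v_pm1 k) => ->; rewrite !intrD !intrN /=.
- by left; field.
- by right; right; left; field.
- by right; right; right; field.
- by right; left; field.
Qed.

Lemma eqN_algC (x : algC) : x != 0 -> (x == - x) = false.
Proof.
move=> x_neq0; apply/negbTE; apply: contra x_neq0 => /eqP xE.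
have : x *+ 2 = 0 by rewrite mulr2n {2}xE subrr.
by move/eqP; rewrite mulrn_eq0.
Qed.

Lemma eq_sqr_neq (x y : algC) : x ^+ 2 != y ^+ 2 -> (x == y) = false.
Proof. by apply: contraNF => /eqP ->. Qed.

Lemma quaternary_quat_of (f : 'Z_m -> algC) : quaternary f ->
  exists u v : 'Z_m -> int,
    [/\ forall y, pm1 (u y), forall y, pm1 (v y) & f =1 quat_of u v].
Proof.
move=> fq.
exists (fun k => if (f k == 1) || (f k == 'i) then 1 else -1).
exists (fun k => if (f k == 1) || (f k == - 'i) then 1 else -1).
split=> [y | y | k]; try by case: ifP; rewrite /pm1; auto.
have sqr1 : (1 : algC) ^+ 2 = 1 by rewrite expr1n.
have sqrN1 : (-1 : algC) ^+ 2 = 1 by rewrite sqrrN expr1n.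
have sqri : ('i : algC) ^+ 2 = -1 by rewrite sqrCi.
have sqrNi : (- 'i : algC) ^+ 2 = -1 by rewrite sqrrN sqrCi.
have N1_1 : ((-1 : algC) == 1) = false by rewrite eq_sym eqN_algC ?oner_eq0.
have N1_i : ((-1 : algC) == 'i) = false by apply: eq_sqr_neq; rewrite sqrN1 sqri eq_sym N1_1.
have N1_Ni : ((-1 : algC) == -'i) = false by apply: eq_sqr_neq; rewrite sqrN1 sqrNi eq_sym N1_1.
have i_1 : ('i == 1 :> algC) = false by apply: eq_sqr_neq; rewrite sqri sqr1 N1_1.
have i_Ni : ('i == -'i :> algC) = false by rewrite eqN_algC ?neq0Ci.
have Ni_1 : (-'i == 1 :> algC) = false by apply: eq_sqr_neq; rewrite sqrNi sqr1 N1_1.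
have Ni_i : (-'i == 'i :> algC) = false by rewrite eq_sym eqN_algC ?neq0Ci.
rewrite /quat_of; case: (fq k) => [->|[->|[->|->]]];
  rewrite ?N1_1 ?N1_i ?N1_Ni ?i_1 ?i_Ni ?Ni_1 ?Ni_i ?eqxx /= !intrD !intrN /=; by field.
Qed.

Lemma eq_is_OQS (f g : 'Z_m -> algC) : f =1 g -> is_OQS f -> is_OQS g.
Proof.
move=> fg [fq fOQS]; split=> [k | w /fOQS]; first by rewrite -fg; apply: fq.
by rewrite /autocorr; under eq_bigr do rewrite !fg.
Qed.

Lemma sqr_sum_eq4 (A B : int) : 2 <= `|A| -> A * A + B * B = 4 <-> `|A| = 2 /\ B = 0.
Proof. by move=> A_ge2; split=> [? | [? ->]]; nia. Qed.

Lemma is_OQS_quat_of u v : (1 < m)%N -> odd m ->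
  (forall y, pm1 (u y)) -> (forall y, pm1 (v y)) ->
  is_OQS (quat_of u v) <-> perfect_pair u v.
Proof.
move=> m_gt1 m_odd u_pm1 v_pm1.
have corr_iff x := iff_trans (normr_autocorr_quat_of u v x)
  (sqr_sum_eq4 (corrB u v x) (corrA_ge2 u_pm1 v_pm1 m_gt1 m_odd x)).
split=> [[_ OQS] x /OQS/corr_iff // | uvP]; split; first exact: quat_of_quaternary.
by move=> w /uvP/corr_iff.
Qed.

End QuaternarySequences.

Theorem corollary4 (m : nat) (hm1 : (1 < m)%N) (hodd : odd m) :
  (exists f : 'Z_m -> algC, is_OQS f) <->
  (exists psi : G2m m -> G2m m -> int,
      is_cocycle psi /\ normalized psi /\ quasi_orthogonal psi /\ ~ coboundary psi).
Proof.
split=> [[f f_OQS] | [psi [psiC [psiN [psiQ psiNC]]]]].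
  have [u [v [u_pm1 v_pm1 fE]]] := quaternary_quat_of f_OQS.1.
  have uvP : perfect_pair u v.
    by apply/(is_OQS_quat_of hm1 hodd u_pm1 v_pm1); apply: eq_is_OQS f_OQS.
  have psiN := psi_of_normalized v u_pm1; have psiNC := psi_of_noncoboundary u_pm1 v_pm1.
  exists (psi_of u v); split; first exact: psi_of_cocycle.
  split=> //; split=> //; apply/(quasi_orthogonal_noncoboundaryE hm1 hodd psiN psiNC).
  exact/(row_excess_psi_ofE u_pm1 v_pm1 hm1 hodd).
have [u [v [u_pm1 v_pm1 psiE]]] := noncoboundary_psi_of hm1 hodd psiC psiN psiNC.
exists (quat_of u v); apply/(is_OQS_quat_of hm1 hodd u_pm1 v_pm1).
apply/(row_excess_psi_ofE u_pm1 v_pm1 hm1 hodd); rewrite -(eq_row_excess psiE).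
exact/(quasi_orthogonal_noncoboundaryE hm1 hodd psiN psiNC).
Qed.
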